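(* Let $\bar\mu_0\ge0$ and $\lambda_j=L^{k-j}$. For every $f\in\mathcal L^2(\Omega)$ and $x\in\Omega$, $$(G_k(\Omega)f)(x)=\sum_{j=1}^{k-1}\lambda_j^{-2}\big(C'_j(\lambda_j\Omega)f_{\lambda_j}\big)(\lambda_jx)+\lambda_1^{-2}\big(G_1(\lambda_1\Omega)f_{\lambda_1}\big)(\lambda_1x),$$ where $f_\lambda(x')=f(\lambda^{-1}x')$ for $x'\in\lambda\Omega$.
   Context: Setup: $d\ge1$, odd integer $L>1$, integers $k\ge1$, $m\ge k$, $\eta=L^{-k}$, $\Omega=\eta\{0,\dots,L^m-1\}^d$, $\Omega_i=(L^i\eta)\{0,\dots,L^{m-i}-1\}^d$. Fix $a\in(0,1]$, $a_j=a\frac{1-L^{-2}}{1-L^{-2j}}$, $\bar\mu_j=L^{2j}\bar\mu_0$. For $1\le j\le k$ put $\lambda_j=L^{k-j}$ and $\Omega^{(j)}=\lambda_j\Omega=L^{-j}\{0,\dots,L^m-1\}^d$ (lattice spacing $L^{-j}$), with coarse lattices $\Omega^{(j)}_i=\lambda_j\Omega_i$ (so $\Omega^{(j)}_j\subset\mathbb Z^d$). On a lattice set $O$ of spacing $\epsilon$, $\mathcal L^2(O)$ carries the inner product $\epsilon^d\sum_{x\in O}\bar fg$. For $y\in(L^{i}\epsilon)\mathbb Z^d$, $B^\epsilon_i(y)=\{x\in\epsilon\mathbb Z^d: y_\mu\le x_\mu<y_\mu+L^i\epsilon\ \forall\mu\}$. Averaging $Q_{\Omega^{(j)},j}:\mathcal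 L^2(\Omega^{(j)})\to\mathcal L^2(\Omega^{(j)}_j)$, $(Qf)(y)=L^{-jd}\sum_{x\in B^{L^{-j}}_j(y)}f(x)$, with adjoint $(Q^*h)(x)=h(y_x)$; one-step averaging $Q_{\Omega^{(j)}_j}:\mathcal L^2(\Omega^{(j)}_j)\to\mathcal L^2(\Omega^{(j)}_{j+1})$, $(Q\psi)(y)=L^{-d}\sum_{y'\in\Omega^{(j)}_j,\ y_\mu\le y'_\mu<y_\mu+L}\psi(y')$. The Neumann Laplacian on a set $O\subset\epsilon\mathbb Z^d$ is $(\Delta^\epsilon_O f)(x)=\epsilon^{-2}\sum_\mu(f(x+\epsilon e_\mu)-2f(x)+f(x-\epsilon e_\mu))$ with $f(x\pm\epsilon e_\mu):=f(x)$ if $x\pm\epsilon e_\mu\notin O$. Define $G_j(\Omega^{(j)})=(-\Delta^{L^{-j}}_{\Omega^{(j)}}+\bar\mu_j+a_jQ^*_{\Omega^{(j)},j}Q_{\Omega^{(j)},j})^{-1}$ (for $j=k$ this is $G_k(\Omega)=(-\Delta^\eta_\Omega+\bar\mu_k+a_kQ_{\Omega,k}^*Q_{\Omega,k})^{-1}$), $\mathcal H_j=a_jG_j(\Omega^{(j)})Q^*_{\Omega^{(j)},j}$, $C_j(\Omega^{(j)})=\big(a_j-a_j^2Q_{\Omega^{(j)},j}G_j(\Omega^{(j)})Q^*_{\Omega^{(j)},j}+aL^{-2}Q^*_{\Omega^{(j)}_j}Q_{\Omega^{(j)}_j}\big)^{-1}$ on $\mathcal L^2(\Omega^{(j)}_j)$,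 and $C'_j(\Omega^{(j)})=\mathcal H_jC_j(\Omega^{(j)})\mathcal H_j^*$. *)

From HB Require Import structures.
From mathcomp Require Import all_boot all_order all_algebra.
From mathcomp Require Import reals.
Set Implicit Arguments. Unset Strict Implicit. Unset Printing Implicit Defensive.
Import Order.TTheory GRing.Theory Num.Theory.
Local Open Scope ring_scope.

(* Lattice points.  A lattice set  eps * {0,...,N-1}^d  (spacing eps) is     *)
(* represented by its integer index set  pt d N = {0,...,N-1}^d ; the index  *)
(* n : pt d N stands for the point  eps * n.  Functions on the lattice set   *)
(* are functions  pt d N -> R ; the spacing eps is carried explicitly by the *)
(* operators (Laplacian, adjoints) that depend on it.                        *)
Definition pt (d N : nat) := {ffun 'I_d -> 'I_N}.

Definition mx_of (R : pzRingType) (S T : finType) (F : (T -> R) -> (S -> R))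
  : 'M[R]_(#|{: S}|, #|{: T}|) :=
  \matrix_(i, j) F (fun t => if t == enum_val j then 1 else 0) (enum_val i).

Definition app (R : pzRingType) (S T : finType) (M : 'M[R]_(#|{: S}|, #|{: T}|))
  (f : T -> R) : S -> R :=
  fun s => (M *m \col_j f (enum_val j)) (enum_rank s) ord0.

Definition op_inv (R : comUnitRingType) (T : finType) (F : (T -> R) -> (T -> R))
  : (T -> R) -> (T -> R) := app (invmx (mx_of F)).

(* Hilbert-space adjoint of F : L^2(T, weight wT) -> L^2(S, weight wS),
   where  <f,g>_T = wT * sum_t f t * g t  (wT = eps^d for spacing eps). *)
Definition adjoint (R : fieldType) (S T : finType) (wS wT : R)
  (F : (T -> R) -> (S -> R)) : (S -> R) -> (T -> R) :=
  app ((wS / wT) *: (mx_of F)^T).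

Definition upd (d N : nat) (x : pt d N) (mu : 'I_d) (k : nat) : pt d N :=
  [ffun nu => if nu == mu then insubd (x nu) k else x nu].

Definition neumann_lap (R : fieldType) (d N : nat) (eps : R) (f : pt d N -> R)
  : pt d N -> R :=
  fun x => eps ^- 2 * \sum_(mu < d)
     ((if ((x mu).+1 < N)%N then f (upd x mu (x mu).+1) else f x)
      - 2 * f x
      + (if (0 < x mu)%N then f (upd x mu (x mu).-1) else f x)).

Definition inblock (d N M b : nat) (x : pt d N) (y : pt d M) : bool :=
  [forall mu, ((x mu) %/ b == y mu)%N].

Definition avg (R : fieldType) (d N M b : nat) (f : pt d N -> R) : pt d M -> R :=
  fun y => (b%:R) ^- d * \sum_(x : pt d N | inblock b x y) f x.

(* its adjoint  (Q^* h)(x) = h(y_x)  (the unique y with x in B(y)) *)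
Definition avg_adj (R : fieldType) (d N M b : nat) (h : pt d M -> R) : pt d N -> R :=
  fun x => \sum_(y : pt d M | inblock b x y) h y.

(* Dilation f_lam (x') = f (lam^-1 x'): a function on Omega, viewed on lam*Omega.
   In index coordinates the point lam*(eta*n) of lam*Omega has index n, i.e.
   the same index as eta*n in Omega; hence f_lam has the same index values. *)
Definition dilate (d N : nat) (R : Type) (f : pt d N -> R) : pt d N -> R :=
  fun n => f n.

Unset Implicit Arguments.
Section Ops.
Variables (R : realType) (d L m : nat) (a mu0 : R).

Definition Lr : R := L%:R.
Definition a_ (j : nat) : R := a * (1 - Lr ^- 2) / (1 - Lr ^- (2 * j)).
Definition mu_ (j : nat) : R := Lr ^+ (2 * j) * mu0.

(* Omega^(j) = L^-j {0,..,L^m-1}^d ;  Omega^(j)_j = {0,..,L^(m-j)-1}^d (spacing 1);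
   Omega^(j)_(j+1) = L {0,..,L^(m-j-1)-1}^d (spacing L). *)
Definition fine := pt d (L ^ m).
Definition coarse (j : nat) := pt d (L ^ (m - j)).

Definition Q_ (j : nat) (f : fine -> R) : coarse j -> R := avg (L ^ j) f.
Definition Qs_ (j : nat) (h : coarse j -> R) : fine -> R := avg_adj (L ^ j) h.

Definition Q1_ (j : nat) (h : coarse j -> R) : coarse j.+1 -> R := avg L h.
Definition Q1s_ (j : nat) (h : coarse j.+1 -> R) : coarse j -> R := avg_adj L h.

Definition G_ (j : nat) : (fine -> R) -> (fine -> R) :=
  op_inv (fun f x => - neumann_lap (Lr ^- j) f x + mu_ j * f x
                      + a_ j * Qs_ j (Q_ j f) x).

Definition H_ (j : nat) (h : coarse j -> R) : fine -> R := fun x => a_ j * G_ j (Qs_ j h) x.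

(* H_j^* ; weights: fine spacing L^-j, coarse spacing 1 *)
Definition Hs_ (j : nat) : (fine -> R) -> (coarse j -> R) :=
  adjoint ((Lr ^- j) ^+ d) 1 (H_ j).

Definition C_ (j : nat) : (coarse j -> R) -> (coarse j -> R) :=
  op_inv (fun h y => a_ j * h y - a_ j ^+ 2 * Q_ j (G_ j (Qs_ j h)) y
                      + a * Lr ^- 2 * Q1s_ j (Q1_ j h) y).

Definition Cp_ (j : nat) (f : fine -> R) : fine -> R := H_ j (C_ j (Hs_ j f)).

End Ops.

From Pilot Require Import Defs.
From HB Require Import structures.
From mathcomp Require Import all_boot all_order all_algebra zify ring lra.
From mathcomp Require Import reals.
From Stdlib Require Import FunctionalExtensionality.
Import Order.TTheory GRing.Theory Num.Theory.
Set Implicit Arguments. Unset Strict Implicit. Unset Printing Implicit Defensive.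
Local Open Scope ring_scope.

(* The theorem is the unfolded form of the one-step recursion
     G_{j+1} = L^-2 (G_j + C'_j)          (1 <= j < m)
   between the operators.  In index coordinates the dilation
   f |-> f_lam is the identity: the rescaling of Omega^(j) is carried by the
   spacing L^-j of the Laplacian inside G_j.  All operators act on functions
   on finite index sets, so the argument is finite-dimensional linear algebra:
   1. an operator commuting with finite linear combinations is the
      application of its matrix [mx_of];
   2. summation by parts for the Neumann Laplacian (symmetry, sign, kernel =
      constants) and the block-averaging identities Q Q^* = 1, Q = b^-d Q^*^T,
      Q_{j+1} = Q_1 Q_j;
   3. hence M_j = -Delta + mu_j + a_j Q^*Q is symmetric positive definite and
      G_j = M_j^-1 exists;
   4. the scaling rules for a_j and mu_j give M_j = L^-2 M_{j+1} + Q^* X Q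
      with X = a_j - a_{j+1} L^-2 Q_1^*Q_1, and a Woodbury-type identity
      expresses (L^-2 M_{j+1})^-1 through G_j and X + X K X = a_j^2 C_j;
   the recursion follows and the theorem is proved by induction on k. *)

Section MatrixRepresentation.
Variable R : fieldType.

Definition dirac (T : finType) (t : T) : T -> R := fun s => if s == t then 1 else 0.

Lemma sum_mul_dirac (T : finType) (g : T -> R) (x : T) :
  \sum_t g t * dirac t x = g x.
Proof.
rewrite (bigD1 x) //= big1 /dirac ?eqxx ?mulr1 ?addr0 // => t /negbTE.
by rewrite eq_sym => ->; rewrite mulr0.
Qed.

Lemma sum_indicator (T : finType) (P : pred T) (t : T) :
  \sum_(x | P x) (if x == t then 1 else 0 : R) = if P t then 1 else 0.
Proof.
rewrite big_mkcond /= (bigD1 t) //= eqxx big1 ?addr0; first by case: (P t).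
by move=> x /negbTE ->; case: (P x).
Qed.

Lemma appE (S T : finType) (M : 'M[R]_(#|{: S}|, #|{: T}|)) f s :
  app M f s = \sum_j M (enum_rank s) j * f (enum_val j).
Proof. by rewrite /app !mxE; apply: eq_bigr => j _; rewrite mxE. Qed.

Lemma app_congr (S T : finType) (M : 'M[R]_(#|{: S}|, #|{: T}|)) f g s :
  (forall t, f t = g t) -> app M f s = app M g s.
Proof. by move=> fg; rewrite !appE; apply: eq_bigr => j _; rewrite fg. Qed.

Lemma app_mul (S T U : finType) (M : 'M[R]_(#|{: S}|, #|{: T}|))
    (N : 'M[R]_(#|{: T}|, #|{: U}|)) f s :
  app M (app N f) s = app (M *m N) f s.
Proof.
have colN : \col_j app N f (enum_val j) = N *m \col_j f (enum_val j).
  by apply/colP => i; rewrite mxE /app enum_valK.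
by rewrite /app colN mulmxA.
Qed.

Lemma app_add (S T : finType) (M N : 'M[R]_(#|{: S}|, #|{: T}|)) f s :
  app (M + N) f s = app M f s + app N f s.
Proof. by rewrite /app mulmxDl mxE. Qed.

Lemma app_opp (S T : finType) (M : 'M[R]_(#|{: S}|, #|{: T}|)) f s :
  app (- M) f s = - app M f s.
Proof. by rewrite /app mulNmx mxE. Qed.

Lemma app_scale (S T : finType) c (M : 'M[R]_(#|{: S}|, #|{: T}|)) f s :
  app (c *: M) f s = c * app M f s.
Proof. by rewrite /app -scalemxAl mxE. Qed.

Lemma app_id (T : finType) f (s : T) : app (1%:M : 'M[R]_#|{: T}|) f s = f s.
Proof. by rewrite /app mul1mx mxE enum_rankK. Qed.

Lemma mx_of_app (S T : finType) (M : 'M[R]_(#|{: S}|, #|{: T}|)) :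
  mx_of (app M) = M.
Proof.
apply/matrixP => i j; rewrite mxE appE enum_valK (bigD1 j) //= eqxx mulr1.
rewrite big1 ?addr0 // => l /negbTE lj.
by rewrite (inj_eq enum_val_inj) lj mulr0.
Qed.

Lemma mx_of_ext (S T : finType) (F : (T -> R) -> S -> R)
    (M : 'M[R]_(#|{: S}|, #|{: T}|)) :
  (forall f s, F f s = app M f s) -> mx_of F = M.
Proof. by move=> H; rewrite -[RHS]mx_of_app; apply/matrixP => i j; rewrite !mxE H. Qed.

Lemma app_inj (S T : finType) (M N : 'M[R]_(#|{: S}|, #|{: T}|)) :
  (forall f s, app M f s = app N f s) -> M = N.
Proof. by move=> H; rewrite -(mx_of_app M); apply: mx_of_ext. Qed.

Lemma mx_ofE (S T : finType) (F : (T -> R) -> S -> R) :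
  (forall (c : T -> R) (g : T -> T -> R) s,
      F (fun x => \sum_t c t * g t x) s = \sum_t c t * F (g t) s) ->
  forall f s, F f s = app (mx_of F) f s.
Proof.
move=> lin f s.
have -> : F f s = \sum_t f t * F (dirac t) s.
  rewrite -lin; congr (F _ s); apply: functional_extensionality => x.
  rewrite -[LHS](sum_mul_dirac f x).
  by apply: eq_bigr => t _; rewrite /dirac eq_sym.
rewrite appE (reindex (@enum_val _ (pred_of_simpl (pred_of_argType T)))) /=.
  by apply: eq_bigr => j _; rewrite mxE enum_rankK mulrC.
by apply: onW_bij; apply: enum_val_bij.
Qed.

Lemma unitmx_of_kernel n (A : 'M[R]_n) :
  (forall v : 'rV_n, v *m A = 0 -> v = 0) -> A \in unitmx.
Proof.
move=> H; rewrite -row_free_unit -kermx_eq0; apply/eqP/row_matrixP => i.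
rewrite row0; apply: H; rewrite -row_mul; apply/rowP => j.
have /eqP -> : kermx A *m A == 0 by rewrite -sub_kermx submx_refl.
by rewrite !mxE.
Qed.

End MatrixRepresentation.

Section Linearity.
Variable R : fieldType.

Lemma avg_lincomb (d N M b : nat) (I : finType) (c : I -> R) (g : I -> pt d N -> R) y :
  avg (M := M) b (fun x => \sum_t c t * g t x) y = \sum_t c t * avg (M := M) b (g t) y.
Proof.
rewrite /avg exchange_big /= mulr_sumr; apply: eq_bigr => t _.
by rewrite -mulr_sumr mulrCA.
Qed.

Lemma avg_adj_lincomb (d N M b : nat) (I : finType) (c : I -> R) (g : I -> pt d M -> R) x :
  avg_adj (N := N) b (fun y => \sum_t c t * g t y) x
  = \sum_t c t * avg_adj (N := N) b (g t) x.
Proof. by rewrite /avg_adj exchange_big /=; apply: eq_bigr => t _; rewrite -mulr_sumr. Qed.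

Lemma lap_lincomb (d N : nat) (eps : R) (I : finType) (c : I -> R) (g : I -> pt d N -> R) x :
  neumann_lap eps (fun x => \sum_t c t * g t x) x = \sum_t c t * neumann_lap eps (g t) x.
Proof.
have ifsum (b : bool) (u v : I -> R) :
    (if b then \sum_t c t * u t else \sum_t c t * v t) = \sum_t c t * (if b then u t else v t).
  by case: b.
have comb3 (A B C : I -> R) : \sum_t c t * A t - 2 * \sum_t c t * B t + \sum_t c t * C t
    = \sum_t c t * (A t - 2 * B t + C t).
  rewrite mulr_sumr -sumrB -big_split /=; apply: eq_bigr => t _.
  by rewrite mulrCA -mulrBr -mulrDr.
rewrite /neumann_lap; under eq_bigr => mu _ do rewrite !ifsum comb3.
rewrite exchange_big mulr_sumr /=; apply: eq_bigr => t _.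
by rewrite mulrCA -mulr_sumr.
Qed.

End Linearity.

Section NeumannLaplacian.
Variables (d N : nat).
Implicit Types (x y : pt d N) (mu nu : 'I_d).

(* the neighbours of x in direction mu (equal to x at the boundary) *)
Definition up mu x := upd x mu (x mu).+1.
Definition dn mu x := upd x mu (x mu).-1.

Lemma upd_val x mu k nu :
  val (upd x mu k nu) = if nu == mu then (if (k < N)%N then k else x nu) else x nu.
Proof. by rewrite /upd ffunE; case: eqP => // _; rewrite val_insubd. Qed.

Lemma up_dn mu x : (0 < x mu)%N -> up mu (dn mu x) = x.
Proof.
move=> x0; apply/ffunP => nu; apply: val_inj; rewrite /up !upd_val.
have lt : ((x mu).-1 < N)%N by rewrite (leq_ltn_trans (leq_pred _) (ltn_ord _)).
case: (eqVneq nu mu) => [->|_] //.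
by rewrite eqxx lt prednK // ltn_ord.
Qed.

Lemma dn_up mu y : ((y mu).+1 < N)%N -> dn mu (up mu y) = y.
Proof.
move=> lt; apply/ffunP => nu; apply: val_inj; rewrite /dn !upd_val.
case: (eqVneq nu mu) => [->|_] //.
by rewrite eqxx lt /= ltn_ord.
Qed.

Lemma up_over mu y : ~~ ((y mu).+1 < N)%N -> up mu y = y.
Proof.
move=> /negbTE H; apply/ffunP => nu; apply: val_inj; rewrite upd_val.
by case: eqP => [->|]; rewrite ?H.
Qed.

Lemma dn_val mu y : val (dn mu y mu) = (y mu).-1.
Proof. by rewrite upd_val eqxx (leq_ltn_trans (leq_pred _) (ltn_ord _)). Qed.

Variable R : fieldType.

Lemma reindex_dn mu (F : pt d N -> R) :
  \sum_(x : pt d N | (0 < x mu)%N) F x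
  = \sum_(y : pt d N | ((y mu).+1 < N)%N) F (up mu y).
Proof.
rewrite (reindex_onto (up mu) (dn mu)); last by move=> x; apply: up_dn.
apply: eq_bigl => y; case H: ((y mu).+1 < N)%N.
  by rewrite dn_up // eqxx andbT upd_val eqxx H.
rewrite up_over ?H //; apply/negbTE/negP => /andP [Hp /eqP].
move=> /(congr1 (fun z : pt d N => val (z mu))); rewrite dn_val => E.
have E' : (nat_of_ord (y mu)).-1 = nat_of_ord (y mu) := E.
by move: Hp E'; case: (nat_of_ord (y mu)) => //= n _; lia.
Qed.

Lemma lap_form (w v : pt d N -> R) :
  \sum_x w x * neumann_lap 1 v x =
  - \sum_mu \sum_(x : pt d N | ((x mu).+1 < N)%N)
        (w (up mu x) - w x) * (v (up mu x) - v x).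
Proof.
have if_split (c1 c2 : bool) (A B C : R) :
    (if c1 then A else B) - 2 * B + (if c2 then C else B)
    = (if c1 then A - B else 0) + (if c2 then C - B else 0).
  by case: c1; case: c2; ring.
rewrite /neumann_lap expr1n invr1.
under eq_bigr => x _ do rewrite mul1r mulr_sumr.
rewrite exchange_big -sumrN; apply: eq_bigr => mu _ /=.
under eq_bigr => x _ do rewrite if_split mulrDr !(fun_if (fun z => w x * z)) !mulr0.
rewrite big_split /= -!big_mkcond /= reindex_dn -sumrN -big_split /=.
apply: eq_bigr => x Hx; rewrite -/(dn mu (up mu x)) dn_up // -/(up mu x); ring.
Qed.

Lemma const_of_edges (f : pt d N -> R) :
  (forall mu x, ((x mu).+1 < N)%N -> f (up mu x) = f x) -> forall x y, f x = f y.
Proof.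
move=> E.
have to_zero mu x : f x = f (upd x mu 0).
  have N0 : (0 < N)%N by apply: leq_ltn_trans (ltn_ord (x mu)).
  move: {2}(nat_of_ord (x mu)) (erefl (nat_of_ord (x mu))) => n.
  elim: n x => [|n IH] x Hx.
    congr f; apply/ffunP => nu; apply: val_inj; rewrite upd_val N0.
    by case: eqP => [->|].
  have Hx' : nat_of_ord (dn mu x mu) = n by rewrite dn_val Hx.
  rewrite -(up_dn (x := x) (mu := mu)) ?Hx // E; last by rewrite Hx' -Hx ltn_ord.
  rewrite (IH _ Hx'); congr f; apply/ffunP => nu; apply: val_inj.
  by rewrite !upd_val N0; case: eqP.
pose zero_on (s : seq 'I_d) x := foldr (fun mu y => upd y mu 0) x s.
have zero_onE s x nu : val (zero_on s x nu) = if nu \in s then 0%N else x nu.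
  have N0 : (0 < N)%N by apply: leq_ltn_trans (ltn_ord (x nu)).
  elim: s => [|mu s IH] //=; rewrite upd_val in_cons N0 IH.
  by case: eqP => [->|].
have to_origin s x : f x = f (zero_on s x).
  by elim: s => [|mu s IH] //=; rewrite -to_zero.
move=> x y; rewrite (to_origin (enum 'I_d) x) (to_origin (enum 'I_d) y); congr f.
by apply/ffunP => nu; apply: val_inj; rewrite !zero_onE mem_enum.
Qed.

End NeumannLaplacian.

Lemma card_div_fibre (N M b c : nat) : (0 < b)%N -> N = (b * M)%N -> (c < M)%N ->
  #|[pred i : 'I_N | (i %/ b == c)%N]| = b.
Proof.
move=> b0 NbM cM.
rewrite -sum1_card -(big_mkord (fun i => (i %/ b == c)%N) (fun _ => 1%N)) big_mkcond /=.
have h1 : (c * b <= c * b + b)%N by rewrite leq_addr.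
have h2 : (c * b + b <= N)%N by rewrite NbM -mulSnr mulnC leq_mul2l cM orbT.
rewrite (big_cat_nat (n := (c * b)%N)) //=; last by apply: leq_trans h2.
rewrite (big_cat_nat (n := (c * b + b)%N) h1 h2) /=.
rewrite (@eq_big_nat _ _ _ 0 (c * b) _ (fun _ => 0%N)); last first.
  move=> i /andP [_ Hi]; case: eqP => // E.
  by move: Hi; rewrite -E ltnNge leq_divM.
rewrite (@eq_big_nat _ _ _ (c * b + b) N _ (fun _ => 0%N)); last first.
  move=> i /andP [Hi _]; case: eqP => // E.
  by move: Hi; rewrite -E -mulSnr leqNgt ltn_ceil.
rewrite (@eq_big_nat _ _ _ (c * b) (c * b + b) _ (fun _ => 1%N)); last first.
  move=> i /andP [Hi Hi']; case: eqP => // E; exfalso; apply: E.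
  apply/eqP; rewrite eqn_leq -ltnS !(leq_divRL, ltn_divLR) //.
  by rewrite mulSn addnC Hi Hi'.
by rewrite !big_const_nat !iter_addn_0 !mul0n mul1n add0n addn0 addKn.
Qed.

Section Blocks.
Variables (d N M b : nat).
Hypotheses (b0 : (0 < b)%N) (NbM : N = (b * M)%N).

Lemma blk_lt (i : 'I_N) : (i %/ b < M)%N.
Proof. by rewrite ltn_divLR // mulnC -NbM. Qed.

Definition blk (x : pt d N) : pt d M := [ffun mu => Ordinal (blk_lt (x mu))].

Lemma inblockE (x : pt d N) (y : pt d M) : inblock b x y = (y == blk x).
Proof.
apply/forallP/eqP => [H|-> mu]; last by rewrite ffunE.
apply/ffunP => nu; apply: val_inj; rewrite ffunE /=.
by apply/esym/eqP; apply: H.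
Qed.

Lemma card_block (y : pt d M) : #|[pred x : pt d N | inblock b x y]| = (b ^ d)%N.
Proof.
have -> : #|[pred x : pt d N | inblock b x y]| =
    #|family (fun mu => [pred i : 'I_N | (i %/ b == y mu)%N])|.
  apply: eq_card => x; rewrite [in LHS]inE /inblock.
  by apply/forallP/familyP => H mu; move: (H mu); rewrite inE.
rewrite card_family /image_mem (eq_map (g := fun _ => b)); last first.
  by move=> mu; apply: card_div_fibre => //; exact: NbM.
have foldr_const (s : seq 'I_d) : foldr muln 1%N [seq b | _ <- s] = (b ^ size s)%N.
  by elim: s => //= x s ->; rewrite expnS.
by rewrite foldr_const -cardE card_ord.
Qed.

Variable R : numFieldType.

Lemma avg_const_on (g : pt d N -> R) (y : pt d M) c :
  (forall x, inblock b x y -> g x = c) -> avg b g y = c.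
Proof.
move=> H; rewrite /avg (eq_bigr (fun _ => c)) //.
rewrite sumr_const card_block -[c *+ _]mulr_natr natrX mulrCA mulVf ?mulr1 //.
by rewrite expf_neq0 // pnatr_eq0 -lt0n.
Qed.

Lemma avg_avg_adj (h : pt d M -> R) y : avg b (avg_adj (N := N) b h) y = h y.
Proof.
apply: avg_const_on => x; rewrite /avg_adj inblockE => /eqP ->.
rewrite (eq_bigl (fun y => y == blk x)); last by move=> z; rewrite inblockE.
by rewrite big_pred1_eq.
Qed.

Lemma avg_adj_form (f : pt d N -> R) :
  \sum_x f x * avg_adj b (avg (M := M) b f) x =
  (b%:R ^+ d) * \sum_(y : pt d M) (avg b f y) ^+ 2.
Proof.
rewrite /avg_adj; under eq_bigr => x _ do rewrite mulr_sumr.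
rewrite (exchange_big_dep xpredT) //= mulr_sumr; apply: eq_bigr => y _.
rewrite -mulr_suml expr2 mulrA; congr (_ * _).
rewrite /avg mulrA mulrV ?mul1r //.
by rewrite unitfE expf_neq0 // pnatr_eq0 -lt0n.
Qed.

End Blocks.

Lemma avg_comp (R : numFieldType) (d N M K b c : nat)
    (b0 : (0 < b)%N) (NbM : N = (b * M)%N) (f : pt d N -> R) (z : pt d K) :
  avg (M := K) c (avg (M := M) b f) z = avg (b * c) f z.
Proof.
have inblock_comp (x : pt d N) : inblock c (blk b0 NbM x) z = inblock (b * c) x z.
  by apply: eq_forallb => mu; rewrite ffunE /= divnMA.
rewrite /avg; under eq_bigr do rewrite mulrC.
rewrite -mulr_suml mulrCA mulrC natrM exprMn invfM [(c%:R ^- d) * _]mulrC; congr (_ * _).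
rewrite (exchange_big_dep (fun x => inblock (b * c) x z)) /=; last first.
  by move=> y x Hy; rewrite inblockE // => /eqP E; rewrite -inblock_comp -E.
apply: eq_bigr => x Hx.
rewrite (eq_bigl (fun y => y == blk b0 NbM x)); first by rewrite big_pred1_eq.
move=> y; rewrite [inblock b _ _]inblockE //; case: eqP => [->|]; rewrite ?andbF //.
by rewrite inblock_comp Hx.
Qed.

(* Q = b^-d Q^*^T, i.e. Q^* is the adjoint of Q for the weights b^d and 1 *)
Lemma avg_tr (R : fieldType) (d N M b : nat) :
  mx_of (avg (R := R) (d := d) (N := N) (M := M) b) =
  (b%:R ^- d) *: (mx_of (avg_adj (R := R) (d := d) (N := N) (M := M) b))^T.
Proof.
apply/matrixP => i l; rewrite !mxE /avg /avg_adj !sum_indicator.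
by case: (inblock b _ _); rewrite ?mulr1 ?mulr0.
Qed.

Section InverseIdentities.
Variable R : fieldType.

Lemma resolvent_l n (A B D : 'M[R]_n) :
  A \in unitmx -> B \in unitmx -> A = B + D ->
  invmx B = invmx A + invmx A *m D *m invmx B.
Proof.
move=> uA uB E.
have e1 : A *m invmx B = 1%:M + D *m invmx B by rewrite E mulmxDl mulmxV.
have e2 : invmx B = invmx A *m (A *m invmx B) by rewrite mulmxA mulVmx // mul1mx.
by rewrite {1}e2 e1 mulmxDr mulmx1 mulmxA.
Qed.

Lemma resolvent_r n (A B D : 'M[R]_n) :
  A \in unitmx -> B \in unitmx -> A = B + D ->
  invmx B = invmx A + invmx B *m D *m invmx A.
Proof.
move=> uA uB E.
have e1 : invmx B *m A = 1%:M + invmx B *m D by rewrite E mulmxDr mulVmx.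
have e2 : invmx B = (invmx B *m A) *m invmx A by rewrite -mulmxA mulmxV // mulmx1.
by rewrite {1}e2 e1 mulmxDl mul1mx.
Qed.

Lemma woodbury n c (A B : 'M[R]_n) (S : 'M_(n, c)) (Q : 'M_(c, n)) (X : 'M_c) :
  A \in unitmx -> B \in unitmx -> A = B + S *m X *m Q ->
  invmx B = invmx A
            + invmx A *m S *m (X + X *m (Q *m invmx B *m S) *m X) *m Q *m invmx A.
Proof.
move=> uA uB E.
rewrite {1}(resolvent_l uA uB E) {1}(resolvent_r uA uB E).
by rewrite !mulmxDr !mulmxDl !mulmxA addrA.
Qed.

Lemma inverse_via_resolvent c (X P K K' : 'M[R]_c) (aj b g : R) :
  X = aj *: 1%:M - b *: P -> P *m P = P -> g * aj = b * (aj + g) ->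
  K' = K + K *m X *m K' ->
  (aj *: 1%:M - aj ^+ 2 *: K + g *: P) *m (X + X *m K' *m X) = aj ^+ 2 *: 1%:M.
Proof.
move=> hX hP hs hK.
have ZX : (aj *: 1%:M + g *: P) *m X = aj ^+ 2 *: 1%:M.
  rewrite hX mulmxDl !mulmxBr -!scalemxAl -!scalemxAr !mul1mx !mulmx1 hP !scalerA.
  by rewrite hs -expr2 mulrDr scalerDl [aj * b]mulrC [g * b]mulrC addrK subrK.
have XE : X + X *m K' *m X = X *m (1%:M + K' *m X) by rewrite mulmxDr mulmx1 mulmxA.
rewrite XE mulmxA addrAC mulmxBl ZX -scalemxAl -scalerBr -scalemxAl; congr (_ *: _).
rewrite mulmxBl mul1mx mulmxDr mulmx1 {1}hK mulmxDl !mulmxA.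
by rewrite addrK.
Qed.

End InverseIdentities.

Section Recursion.
Variables (R : realType) (d L m : nat) (a mu0 : R).

Local Notation F := (fine d L m).
Local Notation co j := (coarse d L m j).
Local Notation Lr := (Lr R L).
Local Notation aj := (a_ R L a).
Local Notation muj := (mu_ R L mu0).

Definition Lap : 'M[R]_#|{: F}| := mx_of (neumann_lap (R := R) (d := d) (N := L ^ m) 1).
Definition Sm j : 'M[R]_(#|{: F}|, #|{: co j}|) := mx_of (Qs_ R d L m j).
Definition Qm j : 'M[R]_(#|{: co j}|, #|{: F}|) := mx_of (Q_ R d L m j).
Definition S1 j : 'M[R]_(#|{: co j}|, #|{: co j.+1}|) := mx_of (Q1s_ R d L m j).
Definition Q1m j : 'M[R]_(#|{: co j.+1}|, #|{: co j}|) := mx_of (Q1_ R d L m j).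

Definition Mm j : 'M[R]_#|{: F}| :=
  - ((Lr ^- j) ^- 2) *: Lap + muj j *: 1%:M + aj j *: (Sm j *m Qm j).
Definition Gm j := invmx (Mm j).
Definition Hm j := aj j *: (Gm j *m Sm j).
Definition Hsm j := ((Lr ^- j) ^+ d / 1) *: (Hm j)^T.
Definition Cmat j : 'M[R]_#|{: co j}| :=
  aj j *: 1%:M - aj j ^+ 2 *: (Qm j *m Gm j *m Sm j) + (a * Lr ^- 2) *: (S1 j *m Q1m j).
Definition Cpm j := Hm j *m invmx (Cmat j) *m Hsm j.

Lemma lapE eps (f : F -> R) x : neumann_lap eps f x = eps ^- 2 * app Lap f x.
Proof.
rewrite -(mx_ofE (fun c g s => lap_lincomb 1 c g s)).
by rewrite /neumann_lap expr1n invr1 mul1r.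
Qed.

Lemma QsE j h x : Qs_ R d L m j h x = app (Sm j) h x.
Proof. exact: (mx_ofE (fun c g s => avg_adj_lincomb _ c g s)). Qed.
Lemma QE j h x : Q_ R d L m j h x = app (Qm j) h x.
Proof. exact: (mx_ofE (fun c g s => avg_lincomb _ c g s)). Qed.
Lemma Q1sE j h x : Q1s_ R d L m j h x = app (S1 j) h x.
Proof. exact: (mx_ofE (fun c g s => avg_adj_lincomb _ c g s)). Qed.
Lemma Q1E j h x : Q1_ R d L m j h x = app (Q1m j) h x.
Proof. exact: (mx_ofE (fun c g s => avg_lincomb _ c g s)). Qed.

Lemma MmE j g y : app (Mm j) g y =
  - neumann_lap (Lr ^- j) g y + muj j * g y + aj j * Qs_ R d L m j (Q_ R d L m j g) y.
Proof.
symmetry; rewrite !app_add !app_scale app_id lapE -app_mul mulNr.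
by rewrite QsE (app_congr _ _ (fun t => QE g t)).
Qed.

Lemma GE j f x : G_ R d L m a mu0 j f x = app (Gm j) f x.
Proof. by rewrite /G_ /op_inv (mx_of_ext (M := Mm j)) // => g y; rewrite MmE. Qed.

Lemma HE j h x : H_ R d L m a mu0 j h x = app (Hm j) h x.
Proof. by rewrite /H_ GE app_scale -app_mul (app_congr _ _ (fun t => QsE h t)). Qed.

Lemma HsE j f y : Hs_ R d L m a mu0 j f y = app (Hsm j) f y.
Proof. by rewrite /Hs_ /adjoint (mx_of_ext (M := Hm j)) // => h x; rewrite HE. Qed.

Lemma CE j h y : C_ R d L m a mu0 j h y = app (invmx (Cmat j)) h y.
Proof.
rewrite /C_ /op_inv (mx_of_ext (M := Cmat j)) // => g z.
rewrite !app_add app_opp !app_scale app_id -!app_mul.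
rewrite Q1sE (app_congr _ _ (fun t => Q1E g t)) QE.
rewrite (app_congr _ _ (fun t => GE j _ t)).
by rewrite (app_congr _ _ (fun t => app_congr _ _ (fun u => QsE g u))).
Qed.

Lemma CpE j f x : Cp_ R d L m a mu0 j f x = app (Cpm j) f x.
Proof.
rewrite /Cp_ HE (app_congr _ _ (fun t => CE _ t)).
rewrite (app_congr _ _ (fun t => app_congr _ _ (fun u => HsE f u))).
by rewrite !app_mul.
Qed.

Hypothesis L1 : (1 < L)%N.

(* the side lengths L^m = L^j L^(m-j) make the averaging blocks tile the grid *)
Lemma Lj_gt0 j : (0 < L ^ j)%N. Proof. by rewrite expn_gt0 ltnW. Qed.
Lemma split_pow j : (j <= m)%N -> (L ^ m = L ^ j * L ^ (m - j))%N.
Proof. by move=> hj; rewrite -expnD subnKC. Qed.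
Lemma split_pow1 j : (j < m)%N -> (L ^ (m - j) = L * L ^ (m - j.+1))%N.
Proof. by move=> hj; rewrite -expnS; have -> : (m - j = (m - j.+1).+1)%N by lia. Qed.

Lemma Q1S j : (j < m)%N -> Q1m j *m S1 j = 1%:M.
Proof.
move=> hj; apply: app_inj => h y; rewrite -app_mul app_id -Q1E.
have -> : app (S1 j) h = Q1s_ R d L m j h.
  by apply: functional_extensionality => t; rewrite Q1sE.
exact: (avg_avg_adj (ltnW L1) (split_pow1 hj)).
Qed.

Lemma Qtr j : Qm j = ((L ^ j)%:R ^- d) *: (Sm j)^T.
Proof. exact: avg_tr. Qed.

Lemma Qcomp j : (j < m)%N -> Qm j.+1 = Q1m j *m Qm j.
Proof.
move=> hj; apply: app_inj => f z; rewrite -app_mul -QE -Q1E.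
have -> : app (Qm j) f = Q_ R d L m j f.
  by apply: functional_extensionality => t; rewrite QE.
by rewrite /Q1_ /Q_ (avg_comp L (Lj_gt0 j) (split_pow (ltnW hj))) expnSr.
Qed.

Lemma Scomp j : (j < m)%N -> Sm j.+1 = Sm j *m S1 j.
Proof.
move=> hj; apply: trmx_inj; apply/(scalerI (a := ((L ^ j.+1)%:R ^- d))).
  by rewrite invr_eq0 expf_neq0 // pnatr_eq0 -lt0n Lj_gt0.
have Q1tr : Q1m j = (L%:R ^- d) *: (S1 j)^T by exact: avg_tr.
rewrite -Qtr Qcomp // Qtr Q1tr trmx_mul -scalemxAl -scalemxAr scalerA.
by rewrite expnSr natrM exprMn invfM mulrC.
Qed.

Lemma Mm_sym j : (Mm j)^T = Mm j.
Proof.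
have Lap_sym : Lap^T = Lap.
  apply/matrixP => i l; rewrite !mxE.
  have pick (w : F -> R) t : \sum_x (if x == t then 1 else 0) * w x = w t.
    rewrite (bigD1 t) //= eqxx mul1r big1 ?addr0 //.
    by move=> x /negbTE ->; rewrite mul0r.
  rewrite -[LHS]pick -[RHS]pick !lap_form; congr (- _); apply: eq_bigr => mu _.
  by apply: eq_bigr => x _; rewrite mulrC.
have SQ_sym : (Sm j *m Qm j)^T = Sm j *m Qm j.
  by rewrite trmx_mul Qtr linearZ /= trmxK -scalemxAl -scalemxAr.
by rewrite /Mm !linearD /= !linearZ /= Lap_sym SQ_sym trmx1.
Qed.

Lemma Gm_sym j : (Gm j)^T = Gm j.
Proof. by rewrite /Gm trmx_inv Mm_sym. Qed.

Hypothesis ha : 0 < a.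
Hypothesis hmu : 0 <= mu0.

Lemma Lr_gt1 : 1 < Lr. Proof. by rewrite /Defs.Lr ltr1n. Qed.
Lemma Lr_gt0 : 0 < Lr. Proof. exact: lt_trans ltr01 Lr_gt1. Qed.
Lemma Lr_neq0 : Lr != 0. Proof. by rewrite gt_eqF // Lr_gt0. Qed.

Lemma one_sub_Lrinv_gt0 n : (0 < n)%N -> 0 < 1 - Lr ^- n.
Proof.
move=> n0; rewrite subr_gt0 invf_lt1 ?exprn_gt0 ?Lr_gt0 //.
by rewrite exprn_egt1 ?Lr_gt1 // -lt0n.
Qed.

Lemma aj_gt0 j : (0 < j)%N -> 0 < aj j.
Proof.
move=> j0; rewrite /a_ divr_gt0 // ?mulr_gt0 // one_sub_Lrinv_gt0 //.
by rewrite muln_gt0.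
Qed.

Definition energy (f : F -> R) : R :=
  \sum_mu \sum_(x : F | ((x mu).+1 < L ^ m)%N) (f (up mu x) - f x) ^+ 2.

Lemma Mm_form j (f : F -> R) :
  \sum_s f s * app (Mm j) f s =
    (Lr ^- j) ^- 2 * energy f + muj j * \sum_s f s ^+ 2
    + aj j * ((L ^ j)%:R ^+ d * \sum_(y : co j) Q_ R d L m j f y ^+ 2).
Proof.
have lap_scale x : neumann_lap (Lr ^- j) f x = (Lr ^- j) ^- 2 * neumann_lap 1 f x.
  by rewrite /neumann_lap expr1n invr1 mul1r.
under eq_bigr => s _ do rewrite MmE lap_scale !mulrDr mulrN.
rewrite !big_split /= sumrN; congr (_ + _ + _).
- under eq_bigr do rewrite mulrCA.
  by rewrite -mulr_sumr lap_form mulrN opprK.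
- by rewrite mulr_sumr; apply: eq_bigr => s _; rewrite mulrCA.
- under eq_bigr do rewrite mulrCA.
  by rewrite -mulr_sumr (avg_adj_form _ (Lj_gt0 j)).
Qed.

(* a vanishing quadratic form forces zero energy and zero block averages, so f = 0 *)
Lemma Mm_form_eq0 j (f : F -> R) : (0 < j)%N -> (j <= m)%N ->
  \sum_s f s * app (Mm j) f s = 0 -> forall x, f x = 0.
Proof.
move=> j0 hj; rewrite Mm_form.
have sq_ge0 (I : finType) (g : I -> R) : 0 <= \sum_i g i ^+ 2.
  by apply: sumr_ge0 => i _; rewrite sqr_ge0.
have e0 : 0 < (Lr ^- j) ^- 2 by rewrite invr_gt0 exprn_gt0 // invr_gt0 exprn_gt0 // Lr_gt0.
have b0 : 0 < (L ^ j)%:R ^+ d :> R by rewrite exprn_gt0 // ltr0n Lj_gt0.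
have E0 : 0 <= energy f.
  by apply: sumr_ge0 => mu _; apply: sumr_ge0 => x _; apply: sqr_ge0.
have X1 : 0 <= (Lr ^- j) ^- 2 * energy f by rewrite mulr_ge0 // ltW.
have X2 : 0 <= muj j * \sum_s f s ^+ 2.
  by apply: mulr_ge0 (sq_ge0 _ _); rewrite mulr_ge0 // exprn_ge0 // ltW // Lr_gt0.
have X3 : 0 <= aj j * ((L ^ j)%:R ^+ d * \sum_(y : co j) Q_ R d L m j f y ^+ 2).
  exact: mulr_ge0 (ltW (aj_gt0 j0)) (mulr_ge0 (ltW b0) (sq_ge0 _ _)).
move=> form0.
have /eqP : (Lr ^- j) ^- 2 * energy f = 0 by lra.
rewrite mulf_eq0 (gt_eqF e0) /= => /eqP energy0.
have /eqP : aj j * ((L ^ j)%:R ^+ d * \sum_(y : co j) Q_ R d L m j f y ^+ 2) = 0 by lra.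
rewrite mulf_eq0 (gt_eqF (aj_gt0 j0)) mulf_eq0 (gt_eqF b0) /= => /eqP avg0.
have edges mu (x : F) : ((x mu).+1 < L ^ m)%N -> f (up mu x) = f x.
  move=> Hx; apply/eqP; rewrite -subr_eq0 -sqrf_eq0; apply/eqP.
  have inner := psumr_eq0P (fun mu _ => sumr_ge0 _ (fun x _ => sqr_ge0 _)) energy0 (i := mu) isT.
  exact: psumr_eq0P (fun x _ => sqr_ge0 _) inner x Hx.
have Q0 y : Q_ R d L m j f y = 0.
  by apply/eqP; rewrite -sqrf_eq0; apply/eqP; apply: (psumr_eq0P (fun y _ => sqr_ge0 _) avg0).
move=> x; rewrite -(Q0 (blk (Lj_gt0 j) (split_pow hj) x)) /Q_.
rewrite (@avg_const_on _ _ _ _ (Lj_gt0 j) (split_pow hj) _ _ _ (f x)) // => x' _.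
exact: const_of_edges edges x' x.
Qed.

(* M_j is positive definite, hence invertible *)
Lemma Mm_unit j : (0 < j)%N -> (j <= m)%N -> Mm j \in unitmx.
Proof.
move=> j0 hj; apply: unitmx_of_kernel => v Hv.
pose f := fun t : F => v 0 (enum_rank t).
have colf : \col_k f (enum_val k) = v^T by apply/colP => k; rewrite !mxE /f enum_valK.
have Mf0 s : app (Mm j) f s = 0.
  have H0 : Mm j *m v^T = 0 by rewrite -Mm_sym -trmx_mul Hv trmx0.
  by rewrite /app colf H0 mxE.
have f0 : forall x, f x = 0.
  by apply: Mm_form_eq0 j0 hj _; rewrite big1 // => s _; rewrite Mf0 mulr0.
apply/rowP => k; rewrite mxE; move: (f0 (enum_val k)); rewrite /f enum_valK.
by rewrite (_ : 0 = ord0) //; apply: val_inj; case: (0 : 'I_1).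
Qed.

Lemma Lrinv_sq_step j : Lr ^- 2 * (Lr ^- j.+1) ^- 2 = (Lr ^- j) ^- 2.
Proof.
rewrite [Lr ^+ j.+1]exprS.
have hj : Lr ^+ j != 0 by rewrite expf_neq0 // Lr_neq0.
by move: hj; set t := Lr ^+ j => hj; field; rewrite Lr_neq0 hj.
Qed.

Lemma muj_step j : Lr ^- 2 * muj j.+1 = muj j.
Proof. by rewrite /mu_ mulnS exprD mulrA mulKf // expf_neq0 // Lr_neq0. Qed.

Lemma aj_step j : (0 < j)%N ->
  (a * Lr ^- 2) * aj j = (aj j.+1 * Lr ^- 2) * (aj j + a * Lr ^- 2).
Proof.
move=> j0; rewrite /a_.
have h1 : 0 < 1 - Lr ^- (2 * j) by apply: one_sub_Lrinv_gt0; rewrite muln_gt0 j0.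
have h2 : 0 < 1 - Lr ^- (2 * j.+1) by apply: one_sub_Lrinv_gt0; rewrite muln_gt0.
move: h2; rewrite mulnS exprD invfM.
set u := Lr ^- 2; set t := Lr ^- (2 * j).
have hu : u != 0 by rewrite invr_eq0 expf_neq0 // Lr_neq0.
move=> h2; have n1 : 1 - t != 0 by rewrite gt_eqF.
have n2 : 1 - u * t != 0 by rewrite gt_eqF.
by field; rewrite n1 n2.
Qed.

(* H_j^* = a_j Q_j G_j, by symmetry of G_j and Q = b^-d Q^*^T *)
Lemma Hsm_eq j : Hsm j = aj j *: (Qm j *m Gm j).
Proof.
have weight : (Lr ^- j) ^+ d = ((L ^ j)%:R ^- d : R) by rewrite natrX exprVn.
rewrite /Hsm /Hm linearZ /= trmx_mul Gm_sym divr1 scalerA mulrC -scalerA.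
by rewrite weight Qtr -scalemxAl.
Qed.

(* the coarse-grid operator through which M_j differs from L^-2 M_{j+1} *)
Definition Xm j : 'M[R]_#|{: co j}| :=
  aj j *: 1%:M - (aj j.+1 * Lr ^- 2) *: (S1 j *m Q1m j).

Lemma Mm_split j : (j < m)%N ->
  Mm j = Lr ^- 2 *: Mm j.+1 + Sm j *m Xm j *m Qm j.
Proof.
move=> hj.
have SXQ : Sm j *m Xm j *m Qm j =
    aj j *: (Sm j *m Qm j) - (aj j.+1 * Lr ^- 2) *: (Sm j *m (S1 j *m Q1m j) *m Qm j).
  by rewrite mulmxBr mulmxBl -!scalemxAr -!scalemxAl mulmx1.
rewrite SXQ /Mm Scomp // Qcomp // !scalerDr !scalerA mulrN Lrinv_sq_step muj_step.
rewrite [Lr ^- 2 * aj j.+1]mulrC !mulmxA -!addrA; congr (_ + (_ + _)).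
by rewrite addrC subrK.
Qed.

Section OneStep.
Variable j : nat.
Hypotheses (j0 : (0 < j)%N) (hj : (j < m)%N).

Let M' := Lr ^- 2 *: Mm j.+1.
Let K' := Qm j *m invmx M' *m Sm j.

Lemma M'_unit : M' \in unitmx.
Proof. by rewrite unitmxZ ?Mm_unit // unitfE invr_eq0 expf_neq0 // Lr_neq0. Qed.

Lemma Cmat_inv : invmx (Cmat j) = (aj j ^+ 2)^-1 *: (Xm j + Xm j *m K' *m Xm j).
Proof.
have uM := Mm_unit j0 (ltnW hj).
have hP : S1 j *m Q1m j *m (S1 j *m Q1m j) = S1 j *m Q1m j.
  by rewrite mulmxA -[S1 j *m Q1m j *m S1 j]mulmxA Q1S // mulmx1.
have hK : K' = Qm j *m Gm j *m Sm j + Qm j *m Gm j *m Sm j *m Xm j *m K'.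
  rewrite {1}/K' (resolvent_l uM M'_unit (Mm_split hj)) /K' /Gm.
  by rewrite mulmxDr mulmxDl !mulmxA.
have CI := inverse_via_resolvent (erefl (Xm j)) hP (aj_step j0) hK.
have ajn : aj j ^+ 2 != 0 by rewrite expf_neq0 // gt_eqF // aj_gt0.
have CI' : Cmat j *m ((aj j ^+ 2)^-1 *: (Xm j + Xm j *m K' *m Xm j)) = 1%:M.
  by rewrite -scalemxAr CI scalerA mulVf ?scale1r.
by rewrite -[RHS](mulKmx (mulmx1_unit CI').1) CI' mulmx1.
Qed.

Lemma Cpm_eq : Cpm j = Gm j *m Sm j *m (Xm j + Xm j *m K' *m Xm j) *m Qm j *m Gm j.
Proof.
have ajn : aj j != 0 by rewrite gt_eqF // aj_gt0.
rewrite /Cpm Hsm_eq Cmat_inv /Hm -!scalemxAl -!scalemxAr !scalerA.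
rewrite -scalemxAl scalerA (_ : aj j * aj j * aj j ^- 2 = 1) ?scale1r ?mulmxA //.
by rewrite -expr2 mulfV // expf_neq0.
Qed.

Lemma Gm_step : Gm j.+1 = Lr ^- 2 *: (Gm j + Cpm j).
Proof.
have l2 : Lr ^- 2 != 0 by rewrite invr_eq0 expf_neq0 // Lr_neq0.
apply: (scalerI (a := (Lr ^- 2)^-1)); first by rewrite invr_eq0.
rewrite scalerA mulVf // scale1r -invmxZ; last exact: M'_unit.
rewrite (woodbury (Mm_unit j0 (ltnW hj)) M'_unit (Mm_split hj)) Cpm_eq.
by rewrite /Gm !mulmxA.
Qed.

End OneStep.

Lemma G_step j f x : (0 < j)%N -> (j < m)%N ->
  G_ R d L m a mu0 j.+1 f x = Lr ^- 2 * (G_ R d L m a mu0 j f x + Cp_ R d L m a mu0 j f x).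
Proof. by move=> j0 hj; rewrite !GE CpE Gm_step // app_scale app_add. Qed.

End Recursion.

Theorem mainTheorem9 (R : realType) (d L k m : nat) (a mu0 : R) :
  (1 <= d)%N -> odd L -> (1 < L)%N -> (1 <= k)%N -> (k <= m)%N ->
  0 < a -> a <= 1 -> 0 <= mu0 ->
  forall (f : fine d L m -> R) (x : fine d L m),
    G_ R d L m a mu0 k f x =
      \sum_(1 <= j < k)
         (Lr R L ^+ (k - j)) ^- 2 * Cp_ R d L m a mu0 j (dilate f) x
    + (Lr R L ^+ (k - 1)) ^- 2 * G_ R d L m a mu0 1 (dilate f) x.
Proof.
move=> _ _ L1 k1 km ha _ hmu f x.
(* in index coordinates the dilation is the identity *)
rewrite /dilate; elim: k k1 km => [//|k IH] _ km.
have pow_step n : (Lr R L ^+ n.+1) ^- 2 = Lr R L ^- 2 * (Lr R L ^+ n) ^- 2.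
  by rewrite [Lr R L ^+ n.+1]exprS exprMn invfM.
case: (posnP k) => [->|k0].
  by rewrite big_geq // add0r subnn expr0 expr1n invr1 mul1r.
rewrite G_step // (IH k0 (ltnW km)) big_nat_recr //= subSnn expr1.
rewrite mulrDr mulrDr mulr_sumr -addrA [_ + Lr R L ^- 2 * _]addrC addrA.
congr (_ + _ + _).
- by apply: eq_big_nat => j /andP [_ hjk]; rewrite mulrA -pow_step subSn // ltnW.
- by rewrite !subn1 /= -[in RHS](prednK k0) pow_step mulrA.
Qed.
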